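(* Let $K$ be a field, let $X$ be a set, let $F \subseteq K\langle X\rangle$ be such that no polynomial in $F$ has a constant term, and let $f \in (F)$. Let $Q=(V,E,X,s,t,l)$ be a labelled quiver whose edges have unique labels in $X$ (i.e. $l$ is injective), and assume that $f$ and all elements of $F$ are compatible with $Q$. Then, for every representation $\mathcal{R}=(\mathcal{V},\varphi)$ of $Q$ over $K$ such that the realizations of the elements of $F$ with respect to $\mathcal{R}$ are zero, the realization of $f$ with respect to $\mathcal{R}$ is zero.
   Context: $K\langle X\rangle$ denotes the free algebra of noncommutative polynomials in the indeterminates $X$ with coefficients in $K$; monomials are words in $\langle X\rangle$ (the free monoid on $X$, including the empty word $1$). Every $f$ has a unique representation $f=\sum_m c_m m$ with finitely many nonzero $c_m\in K$, and $\operatorname{supp}(f)=\{m : c_m\neq 0\}$. $(F)$ is the two-sided ideal generated by $F$. A labelled quiver $Q=(V,E,X,s,t,l)$ consists of a set of vertices $V$, a set of edges $E$, maps $s,t:E\to V$ (source, target) and a labelling $l:E\to X$. A nonempty path $p=e_n\cdots e_1$ (edges with $s(e_{i+1})=t(e_i)$) has label $l(p)=l(e_n)\cdots l(e_1)\in\langle X\rangle$, source $s(e_1)$ and target $t(e_n)$; for each vertex $v$ there is an empty path $\epsilon_v$ with label $1$ and source and target $v$. For a monomial $m$, $\sigma(m)=\{(s(p),t(p)) : p \text{ a path in } Q \text{ with } l(p)=m\}$, and for a polynomial $f$, $\sigma(f)=\bigcap_{m\in\operatorname{supp}(f)}\sigma(m)$ (so $\sigma(0)=V\times V$). $f$ is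 compatible with $Q$ if $\sigma(f)\neq\emptyset$. For $v,w\in V$ let $K\langle X\rangle_{v,w}=\{f : (v,w)\in\sigma(f)\}$. A representation $(\mathcal{V},\varphi)$ of $Q$ over $K$ assigns to each vertex $v$ a $K$-vector space $\mathcal{V}_v$ and to each edge $e$ a $K$-linear map $\varphi(e):\mathcal{V}_{s(e)}\to\mathcal{V}_{t(e)}$. For $v,w\in V$, the realization map $\varphi_{v,w}:K\langle X\rangle_{v,w}\to L(\mathcal{V}_v,\mathcal{V}_w)$ is the $K$-linear map with $\varphi_{v,w}(l(e_n\cdots e_1))=\varphi(e_n)\cdots\varphi(e_1)$ for each nonempty path $e_n\cdots e_1$ from $v$ to $w$ and $\varphi_{v,v}(1)=\mathrm{id}_{\mathcal{V}_v}$; for $f\in K\langle X\rangle_{v,w}$, $\varphi_{v,w}(f)$ is called a realization of $f$ with respect to the representation. (Under the hypotheses of unique labels and no constant terms, these maps are well defined and a compatible nonzero polynomial has a unique realization.) *)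

From HB Require Import structures.
From mathcomp Require Import all_boot all_order all_algebra.
From mathcomp Require Import finmap.
From mathcomp.multinomials Require Import monalg.
From Stdlib Require Import ClassicalEpsilon.

Set Implicit Arguments.
Unset Strict Implicit.
Unset Printing Implicit Defensive.

Import GRing.Theory.
Local Open Scope ring_scope.

(* The free algebra K<X>: finitely supported K-valued functions on the free
   monoid {fmonom X} (words over X, empty word = mone), with the
   concatenation (non-commutative) product. *)
Notation freealg K X := {malg K[{fmonom X}]}.

Definition const_term (K : fieldType) (X : choiceType) (f : freealg K X) : K :=
  f@_(mone : {fmonom X}).

Definition in_ideal (K : fieldType) (X : choiceType)
    (F : freealg K X -> Prop) (f : freealg K X) : Prop :=
  exists (n : nat) (a g b : 'I_n -> freealg K X),
    (forall i, F (g i)) /\ f = \sum_(i < n) a i * g i * b i.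

(* A path p = e_n ... e_1 from v to w
   with label l(e_n) ... l(e_1) (as a word, leftmost letter = label of the last
   edge e_n).  [qpath s t l v w m] is the type of paths from v to w with label m;
   [pnil v] is the empty path at v (label 1), and [pcons e p] extends a path p
   ending at s e by the edge e. *)
Inductive qpath (V E X : Type) (s t : E -> V) (l : E -> X) (v : V)
    : V -> seq X -> Type :=
| pnil : qpath s t l v v [::]
| pcons (e : E) (m : seq X) :
    qpath s t l v (s e) m -> qpath s t l v (t e) (l e :: m).

Definition in_sigma_mon (V E : Type) (X : choiceType) (s t : E -> V) (l : E -> X)
    (v w : V) (m : {fmonom X}) : Prop :=
  inhabited (qpath s t l v w m).

Definition in_sigma (K : fieldType) (V E : Type) (X : choiceType)
    (s t : E -> V) (l : E -> X) (v w : V) (f : freealg K X) : Prop :=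
  forall m : {fmonom X}, m \in msupp f -> in_sigma_mon s t l v w m.

Definition compatible (K : fieldType) (V E : Type) (X : choiceType)
    (s t : E -> V) (l : E -> X) (f : freealg K X) : Prop :=
  exists v w : V, in_sigma s t l v w f.

Section Realization.
Variables (K : fieldType) (V E : Type) (X : choiceType).
Variables (s t : E -> V) (l : E -> X).
Variables (Vsp : V -> lmodType K) (phi : forall e : E, {linear Vsp (s e) -> Vsp (t e)}).

Fixpoint real_path (v w : V) (m : seq X) (p : qpath s t l v w m) : Vsp v -> Vsp w :=
  match p in qpath _ _ _ _ w' m' return Vsp v -> Vsp w' with
  | pnil => fun x => x
  | pcons e _ p' => fun x => phi e (real_path p' x)
  end.

(* Realization of a monomial m from v to w: phi along a path from v to w
   labelled m (a path is chosen if one exists; with unique labels it is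
   unique).  Only used when (v,w) \in sigma(m). *)
Definition real_mon (v w : V) (m : {fmonom X}) : Vsp v -> Vsp w :=
  match excluded_middle_informative (inhabited (qpath s t l v w m)) with
  | left H => real_path (epsilon H (fun _ => True))
  | right _ => fun _ => 0
  end.
Arguments real_mon : clear implicits.

Definition realization (v w : V) (f : freealg K X) (x : Vsp v) : Vsp w :=
  \sum_(m <- msupp f) f@_m *: real_mon v w m x.
Arguments realization : clear implicits.

Definition realization_zero (v w : V) (f : freealg K X) : Prop :=
  forall x : Vsp v, realization v w f x = 0.
Arguments realization_zero : clear implicits.

End Realization.
Arguments real_mon {K V E X s t} l {Vsp} phi v w m.
Arguments realization {K V E X s t} l {Vsp} phi v w f x.
Arguments realization_zero {K V E X s t} l {Vsp} phi v w f.

From Pilot Require Import Defs.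
From HB Require Import structures.
From mathcomp Require Import all_boot all_order all_algebra.
From mathcomp Require Import finmap.
From mathcomp.multinomials Require Import monalg.
From Stdlib Require Import ClassicalEpsilon Eqdep.

Set Implicit Arguments.
Unset Strict Implicit.
Unset Printing Implicit Defensive.
Import GRing.Theory.
Local Open Scope fset_scope.
Local Open Scope ring_scope.

(* With unique labels, a nonempty word labels only paths between one fixed
   pair of vertices.  Hence, for a word m with a path from p to q and m <> 1,
   the realization of m1 m m2 from v to w factors as
   phi_{q,w}(m1) o phi_{p,q}(m) o phi_{v,p}(m2), both sides being 0 when no
   path exists.  A generator g of (F) has no constant term and all its words
   share a pair (p,q) in sigma(g), so by linearity
   phi_{v,w}(m1 g m2) = phi_{q,w}(m1) o phi_{p,q}(g) o phi_{v,p}(m2) = 0, and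
   every element of (F) is a linear combination of such products. *)

Section QuiverPaths.
Variables (V E X : Type) (s t : E -> V) (l : E -> X).

Notation qp := (qpath s t l).

Fixpoint qpath_cat v u w m2 m1 (q2 : qp v u m2) (q1 : qp u w m1) : qp v w (m1 ++ m2) :=
  match q1 in qpath _ _ _ _ w' m' return qp v w' (m' ++ m2) with
  | pnil => q2
  | pcons e m q1' => pcons (qpath_cat q2 q1')
  end.

Lemma qpath_split v w m1 m2 (p : qp v w (m1 ++ m2)) :
  exists u, inhabited (qp v u m2) /\ inhabited (qp u w m1).
Proof.
move: p; move Em: (m1 ++ m2) => m p.
elim: p m1 Em => [|e m0 p IH] [|x m1] //=.
- by move=> ->; exists v; split; constructor; apply: pnil.
- by move=> ->; exists (t e); split; constructor; [apply: pcons p | apply: pnil].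
- case=> -> /IH [u [[q2] [q1]]].
  by exists u; split; constructor; [apply: q2 | apply: pcons q1].
Qed.

Lemma qpath_nil v w (p : qp v w [::]) : v = w.
Proof. by move: p; move E0: [::] => m p; case: p E0. Qed.

Hypothesis l_inj : injective l.

Lemma qpath_ends_uniq v w m (p : qp v w m) v' w' (p' : qp v' w' m) :
  m <> [::] -> v = v' /\ w = w'.
Proof.
move: p'; move Em: m => m' p'.
elim: p v' w' m' p' Em => [|e m0 p IH] v' w' m' p'; first by move=> <-.
case: p' => [|e' m0' p'] [] // /l_inj ee' Em0 _; subst e'; split=> //.
case: m0 p p' Em0 IH => [|x m0] p p' Em0 IH.
  by subst m0'; rewrite (qpath_nil p) (qpath_nil p').
by case: (IH _ _ _ p' Em0); rewrite -?Em0.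
Qed.

End QuiverPaths.

Section PathRealization.
Variables (K : fieldType) (V E : Type) (X : choiceType).
Variables (s t : E -> V) (l : E -> X).
Variables (Vsp : V -> lmodType K) (phi : forall e : E, {linear Vsp (s e) -> Vsp (t e)}).

Notation qp := (qpath s t l).
Notation rp := (real_path phi).
Notation RM := (real_mon l phi).

Lemma real_path_cat v u w m2 m1 (q2 : qp v u m2) (q1 : qp u w m1) :
  rp (qpath_cat q2 q1) =1 rp q1 \o rp q2.
Proof. by move=> y; elim: q1 => //= e m q1 ->. Qed.

Lemma real_path_is_linear v w m (p : qp v w m) : linear (rp p).
Proof. by move=> c y z; elim: p => //= e m0 p ->; rewrite linearP. Qed.

HB.instance Definition _ v w m (p : qp v w m) :=
  GRing.isLinear.Build K (Vsp v) (Vsp w) *:%R (rp p) (real_path_is_linear p).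

Lemma real_mon_is_linear v w m : linear (RM v w m).
Proof.
rewrite /real_mon; case: excluded_middle_informative => [H|_] c y z /=.
  exact: linearP.
by rewrite scaler0 addr0.
Qed.

End PathRealization.

HB.instance Definition _ (K : fieldType) (V E : Type) (X : choiceType)
    (s t : E -> V) (l : E -> X) (Vsp : V -> lmodType K)
    (phi : forall e : E, {linear Vsp (s e) -> Vsp (t e)}) v w m :=
  GRing.isLinear.Build K (Vsp v) (Vsp w) *:%R (real_mon l phi v w m)
    (@real_mon_is_linear K V E X s t l Vsp phi v w m).

Section UniqueLabels.
Variables (K : fieldType) (V E : Type) (X : choiceType).
Variables (s t : E -> V) (l : E -> X).
Hypothesis l_inj : injective l.
Variables (Vsp : V -> lmodType K) (phi : forall e : E, {linear Vsp (s e) -> Vsp (t e)}).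

Notation qp := (qpath s t l).
Notation rp := (real_path phi).
Notation RM := (real_mon l phi).

Lemma real_path_uniq v w m (p1 p2 : qp v w m) : rp p1 =1 rp p2.
Proof.
move=> y; apply: (inj_pair2 _ Vsp w).
suff: forall w' m' (p' : qp v w' m'), m = m' ->
    existT Vsp w (rp p1 y) = existT Vsp w' (rp p' y) by move/(_ _ _ p2 erefl).
elim: p1 => [|e m0 p1 IH] w' m' [|e' m0' p'] //= [/l_inj ee' /(IH _ _ p')].
by subst e' => /(inj_pair2 _ Vsp) ->.
Qed.

Lemma real_monE v w (m : {fmonom X}) ms (p : qp v w ms) :
  m = ms :> seq X -> RM v w m =1 rp p.
Proof.
move=> Em y; rewrite /real_mon; case: excluded_middle_informative => [H|[]].
  by subst ms; apply: real_path_uniq.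
by rewrite Em; exists.
Qed.

Lemma real_mon_nopath v w (m : {fmonom X}) y :
  ~ inhabited (qp v w m) -> RM v w m y = 0.
Proof. by rewrite /real_mon; case: excluded_middle_informative. Qed.

Lemma real_mon_mul3 a b (m : {fmonom X}) (pm : qp a b m) v w m1 m2 :
  m != mone -> RM v w (mmul (mmul m1 m) m2) =1 RM b w m1 \o RM a b m \o RM v a m2.
Proof.
move=> m_neq1 y /=.
have Em : mmul (mmul m1 m) m2 = (m1 ++ m) ++ m2 :> seq X by rewrite !fmM.
have [[P]|noP] := classic (inhabited (qp v w (mmul (mmul m1 m) m2))).
  move: P; rewrite Em => P.
  have [u [[q2] [q12]]] := qpath_split P.
  have [u' [[qm] [q1]]] := qpath_split q12.
  have m_nil : (m : seq X) <> [::].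
    by move=> m0; apply: (elimN eqP m_neq1); apply: val_inj; rewrite /= m0 fm1.
  have [<- <-] := qpath_ends_uniq l_inj qm pm m_nil.
  rewrite (real_monE (qpath_cat q2 (qpath_cat qm q1))) //.
  rewrite real_path_cat /= real_path_cat.
  by rewrite (real_monE q1) // (real_monE qm) // (real_monE q2).
rewrite real_mon_nopath //.
have [[q2]|no2] := classic (inhabited (qp v a m2)).
  have [[q1]|no1] := classic (inhabited (qp b w m1)).
    by case: noP; rewrite Em; exists; apply: qpath_cat q2 (qpath_cat pm q1).
  by rewrite real_mon_nopath.
by rewrite (real_mon_nopath _ no2) !linear0.
Qed.

End UniqueLabels.

Section MalgProducts.
Variables (M : monomType) (R : comRingType).
Implicit Types (a g b : {malg R[M]}) (k : M).

Lemma monalgU_scale c k : << c *g k >> = c *: (<< k >> : {malg R[M]}).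
Proof. by apply/malgP => k'; rewrite mcoeffZ !mcoeffU mulr_natr. Qed.

Lemma malg_scalerAr c a b : a * (c *: b) = c *: (a * b).
Proof.
apply/malgP => k; rewrite mcoeffZ (@mcoeffMrw _ _ (msupp a) (msupp b)) ?msuppZ_le //.
rewrite mcoeffMr mulr_sumr; apply: eq_bigr => k2 _; rewrite mulr_sumr.
by apply: eq_bigr => k1 _; rewrite mcoeffZ mulrCA mulrnAr.
Qed.

Lemma malg_mul3E a g b :
  a * g * b = \sum_(m1 <- msupp a) \sum_(m2 <- msupp b)
                (a@_m1 * b@_m2) *: (<< m1 >> * g * << m2 >>).
Proof.
rewrite {1}(monalgE a) {1}(monalgE b) [_ * g]mulr_suml mulr_suml.
apply: eq_bigr => m1 _.
rewrite (mulr_sumr _ _ _ (<< a@_m1 *g m1 >> * g)); apply: eq_bigr => m2 _.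
rewrite (monalgU_scale (a@_m1)) (monalgU_scale (b@_m2)).
by rewrite -scalerAl -scalerAl malg_scalerAr scalerA.
Qed.

Lemma monalgU_mul3E k1 g k2 :
  << k1 >> * g * << k2 >> = \sum_(m <- msupp g) << g@_m *g mmul (mmul k1 m) k2 >>.
Proof.
rewrite {1}(monalgE g) (mulr_sumr _ _ _ << k1 >>) (mulr_suml _ _ _ << k2 >>).
by apply: eq_bigr => m _; rewrite !malgM_def !fgmulUU mul1r mulr1.
Qed.

End MalgProducts.

Section Realization.
Variables (K : fieldType) (V E : Type) (X : choiceType).
Variables (s t : E -> V) (l : E -> X).
Variables (Vsp : V -> lmodType K) (phi : forall e : E, {linear Vsp (s e) -> Vsp (t e)}).

Notation RM := (real_mon l phi).
Notation realization := (realization l phi).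

Lemma realizationEw v w f (D : {fset {fmonom X}}) x :
  msupp f `<=` D -> realization v w f x = \sum_(m <- D) f@_m *: RM v w m x.
Proof.
move=> fD; apply: big_fset_incl => // m _ /mcoeff_outdom ->.
by rewrite scale0r.
Qed.

Lemma realizationD v w f g x :
  realization v w (f + g) x = realization v w f x + realization v w g x.
Proof.
rewrite !(@realizationEw _ _ _ (msupp f `|` msupp g))
  ?fsubsetUl ?fsubsetUr ?msuppD_le //.
by rewrite -big_split; apply: eq_bigr => m _; rewrite mcoeffD scalerDl.
Qed.

Lemma realizationZ v w c f x : realization v w (c *: f) x = c *: realization v w f x.
Proof.
rewrite (@realizationEw _ _ _ (msupp f)) ?msuppZ_le // scaler_sumr.
by apply: eq_bigr => m _; rewrite mcoeffZ scalerA.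
Qed.

Lemma realization_sum v w (I : Type) (r : seq I) (F : I -> freealg K X) x :
  realization v w (\sum_(i <- r) F i) x = \sum_(i <- r) realization v w (F i) x.
Proof.
apply: (big_morph (realization v w ^~ x)) => [f g|]; first exact: realizationD.
by rewrite /Defs.realization msupp0 big_nil.
Qed.

Lemma realizationU v w c m x : realization v w << c *g m >> x = c *: RM v w m x.
Proof. by rewrite (realizationEw _ _ msuppU_le) big_seq_fset1 mcoeffUU. Qed.

Hypothesis l_inj : injective l.

Lemma realization_mulU3 g p q v w m1 m2 x :
  const_term g = 0 -> in_sigma s t l p q g ->
  realization v w (<< m1 >> * g * << m2 >>) x =
  RM q w m1 (realization p q g (RM v p m2 x)).
Proof.
move=> g0 gpq; rewrite monalgU_mul3E realization_sum.
rewrite [realization p q g _]/Defs.realization linear_sum.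
apply: eq_big_seq => m gm; rewrite realizationU linearZ /=.
have [pm] := gpq m gm.
have m_neq1 : m != mone.
  by apply: contraTneq gm => ->; rewrite -mcoeff_neq0 negbK; apply/eqP.
by rewrite (real_mon_mul3 l_inj phi pm).
Qed.

Lemma realization_mul3_eq0 g p q :
  const_term g = 0 -> in_sigma s t l p q g -> realization_zero l phi p q g ->
  forall v w a b x, realization v w (a * g * b) x = 0.
Proof.
move=> g0 gpq gz v w a b x; rewrite malg_mul3E realization_sum big1 // => m1 _.
rewrite realization_sum big1 // => m2 _.
by rewrite realizationZ (realization_mulU3 _ _ _ _ g0 gpq) gz linear0 scaler0.
Qed.

End Realization.

Theorem theorem1p1 (K : fieldType) (X : choiceType)
    (F : freealg K X -> Prop) (f : freealg K X)
    (V E : Type) (s t : E -> V) (l : E -> X) :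
  (forall g, F g -> const_term g = 0) ->
  in_ideal F f ->
  injective l ->
  compatible s t l f ->
  (forall g, F g -> compatible s t l g) ->
  forall (Vsp : V -> lmodType K)
         (phi : forall e : E, {linear Vsp (s e) -> Vsp (t e)}),
    (forall g, F g -> forall v w : V, in_sigma s t l v w g ->
       realization_zero l phi v w g) ->
    forall v w : V, in_sigma s t l v w f -> realization_zero l phi v w f.
Proof.
(* Elements of (F) realize to 0 between any two vertices. *)
move=> F_const [n [a [g [b [Fg ->]]]]] l_inj _ F_compat Vsp phi F_zero v w _ x.
rewrite realization_sum big1 // => i _.
have [p [q gpq]] := F_compat _ (Fg i).
exact: (realization_mul3_eq0 l_inj (F_const _ (Fg i)) gpq (F_zero _ (Fg i) p q gpq)).
Qed.
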